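(* Let $c>0$ and let $(\vartheta_n)$ be a sequence with $0\le\vartheta_n\nearrow\vartheta_\infty$, $\vartheta_\infty\in(0,1)$. For each $n$ let $T_n>0$ and $u_n$ be a classical entire solution of $\partial_t u=\partial_{xx}u-c\partial_x u$ ($x>0$), $\partial_x u=1+\vartheta_n h(u)$ ($x=0$), with $u_n(\cdot,t)\in Y_c$, $u_n(\cdot,T_n)=u_n(\cdot,0)-2\pi$, $\partial_t u_n<0$, and $u_n(0,0)=0$. Then there exist $\lambda,\mu>0$ such that for all $n$, $$\frac{2\pi}{\mu}\le T_n\le\frac{2\pi}{\lambda}.$$
   Context: $h\in C^2(\mathbb{R},\mathbb{R})$ is $2\pi$-periodic with $\max h=1$, $\min h=h(\pi)=-1$. $Y_c$ is the space of $v$ on $[0,\infty)$ with $x\mapsto e^{-cx/2}v(x)$ bounded and uniformly continuous. *)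

From Stdlib Require Import Reals Lra.
From Coquelicot Require Import Coquelicot.
Open Scope R_scope.

Definition C2 (h : R -> R) : Prop :=
  exists h1 h2 : R -> R,
    (forall x, is_derive h x (h1 x)) /\
    (forall x, is_derive h1 x (h2 x)) /\
    (forall x, continuous h2 x).

Definition admissible_h (h : R -> R) : Prop :=
  C2 h /\
  (forall x, h (x + 2 * PI) = h x) /\
  (forall x, h x <= 1) /\ (exists x, h x = 1) /\
  (forall x, -1 <= h x) /\ h PI = -1.

Definition Yc (c : R) (v : R -> R) : Prop :=
  let w := fun x => exp (- c * x / 2) * v x in
  (exists M, forall x, 0 <= x -> Rabs (w x) <= M) /\
  (forall eps, 0 < eps -> exists delta, 0 < delta /\
     forall x y, 0 <= x -> 0 <= y -> Rabs (x - y) < delta ->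
       Rabs (w x - w y) < eps).

Definition cont_on (P : R -> Prop) (f : R -> R -> R) : Prop :=
  forall x t, P x -> forall eps, 0 < eps -> exists delta, 0 < delta /\
    forall y s, P y -> Rabs (y - x) < delta -> Rabs (s - t) < delta ->
      Rabs (f y s - f x t) < eps.

Definition classical_entire_solution (c theta : R) (h : R -> R)
    (u : R -> R -> R) : Prop :=
  exists ut ux uxx : R -> R -> R,
    cont_on (fun x => 0 <= x) u /\
    cont_on (fun x => 0 <= x) ux /\
    cont_on (fun x => 0 < x) ut /\
    cont_on (fun x => 0 < x) uxx /\
    (forall x t, 0 <= x -> is_derive (fun s => u x s) t (ut x t)) /\
    (forall x t, 0 < x -> is_derive (fun y => u y t) x (ux x t)) /\
    (forall x t, 0 < x -> is_derive (fun y => ux y t) x (uxx x t)) /\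
    (forall t, filterlim (fun y => (u y t - u 0 t) / y) (at_right 0)
                 (locally (ux 0 t))) /\
    (forall x t, 0 < x -> ut x t = uxx x t - c * ux x t) /\
    (forall t, ux 0 t = 1 + theta * h (u 0 t)).

From Stdlib Require Import Reals Lra.
From Coquelicot Require Import Coquelicot.
Open Scope R_scope.

(* Write k = 2 pi / c and I(y) = int_0^T u_x(y,t) dt. The equation reads
   (e^{-cx} u_x)_x = e^{-cx} u_t, so integrating over [a,b] x [0,T] and using
   u(.,T) = u(.,0) - 2 pi gives e^{-cy} (I(y) - k) = C for a constant C. Since I is
   the derivative of K(y) = int_0^T u(y,t) dt, K grows like (C/c) e^{cy}; but u is
   decreasing in t and u(.,0) is in Y_c, so K(y) = O(e^{cy/2}), forcing C = 0.
   Letting y -> 0, the boundary condition gives 2 pi / c = int_0^T (1 + theta h) dt,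
   which lies within theta T of T; with theta_n <= theta_inf < 1 this yields the
   bounds for lambda = c (1 - theta_inf) and mu = c (1 + theta_inf). *)

Lemma exp_dominated_nonpos (a A B c : R) : 0 < c ->
  (forall X, 1 <= X -> a * exp (c * X) <= A + B * exp (c * X / 2)) -> a <= 0.
Proof.
  intros Hc Hdom. apply Rnot_lt_le. intros Ha.
  (* X is chosen so that e^{cX/2} >= N + 1, where a N = |A| + |B| + 1. *)
  set (N := (Rabs A + Rabs B + 1) / a).
  pose proof (Rle_abs A). pose proof (Rle_abs B). pose proof (Rabs_pos A). pose proof (Rabs_pos B).
  assert (HN : 0 < N) by (apply Rdiv_lt_0_compat; lra).
  set (X := 1 + 2 * N / c).
  assert (HX : 1 <= X) by (unfold X; pose proof (Rdiv_lt_0_compat (2 * N) c ltac:(lra) Hc); lra).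
  specialize (Hdom X HX).
  set (y := exp (c * X / 2)) in Hdom.
  assert (Hsq : exp (c * X) = y * y) by (unfold y; rewrite <- exp_plus; f_equal; field).
  assert (HyN : N + 1 <= y).
  { unfold y. eapply Rle_trans; [| apply exp_ineq1_le].
    unfold X. replace (c * (1 + 2 * N / c) / 2) with (c / 2 + N) by (field; lra). lra. }
  assert (HaN : a * N = Rabs A + Rabs B + 1) by (unfold N; field; lra).
  assert (Hy : 0 < y) by apply exp_pos.
  assert (0 <= (y - (N + 1)) * (a * y)) by (apply Rmult_le_pos; nra).
  assert (0 <= (y - 1) * Rabs A) by (apply Rmult_le_pos; lra).
  rewrite Hsq in Hdom. nra.
Qed.

Lemma is_derive_neg_le (f df : R -> R) (a b : R) :
  (forall t, is_derive f t (df t)) -> (forall t, df t < 0) -> a <= b -> f b <= f a.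
Proof.
  intros Hf Hneg Hab.
  destruct (MVT_gen f a b df) as [xi [_ Hxi]].
  - intros x _. apply Hf.
  - intros x _. apply continuity_pt_filterlim.
    apply (ex_derive_continuous (K := R_AbsRing) (V := R_NormedModule)). eexists. apply Hf.
  - specialize (Hneg xi). nra.
Qed.

Lemma Rmin_Rmax_pos (a b x : R) : 0 < a -> 0 < b -> Rmin a b <= x <= Rmax a b -> 0 < x.
Proof.
  intros Ha Hb [Hx _]. apply Rlt_le_trans with (Rmin a b); [apply Rmin_glb_lt |]; assumption.
Qed.

Lemma Rabs_sub_lt_pos (x y : R) : Rabs (y - x) < x -> 0 < y.
Proof. intros H. apply Rabs_def2 in H. lra. Qed.

Section JointContinuity.

Variables (P : R -> Prop) (f : R -> R -> R).
Hypothesis f_cont : cont_on P f.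

Lemma cont_on_continuous_t (x t : R) : P x -> continuous (fun s => f x s) t.
Proof.
  intros Px. apply filterlim_locally. intros eps.
  destruct (f_cont x t Px eps (cond_pos eps)) as [d [Hd Hclose]].
  exists (mkposreal d Hd). intros s Hs. apply Hclose; [exact Px | | exact Hs].
  rewrite Rminus_eq_0, Rabs_R0. exact Hd.
Qed.

Lemma cont_on_ex_RInt_t (x a b : R) : P x -> ex_RInt (fun t => f x t) a b.
Proof.
  intros Px. apply (ex_RInt_continuous (V := R_CompleteNormedModule)). intros t _.
  now apply cont_on_continuous_t.
Qed.

Hypothesis P_pos : forall y, 0 < y -> P y.

Lemma cont_on_continuity_2d_pt (x t : R) : 0 < x -> continuity_2d_pt f x t.
Proof.
  intros Hx eps.
  destruct (f_cont x t (P_pos x Hx) eps (cond_pos eps)) as [d [Hd Hclose]].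
  exists (mkposreal (Rmin d x) (Rmin_pos _ _ Hd Hx)). simpl. intros y s Hy Hs.
  apply Hclose.
  - apply P_pos, (Rabs_sub_lt_pos x). eapply Rlt_le_trans; [exact Hy | apply Rmin_r].
  - eapply Rlt_le_trans; [exact Hy | apply Rmin_l].
  - eapply Rlt_le_trans; [exact Hs | apply Rmin_l].
Qed.

Lemma cont_on_continuous_x (x t : R) : 0 < x -> continuous (fun y => f y t) x.
Proof.
  intros Hx. apply filterlim_locally. intros eps.
  destruct (cont_on_continuity_2d_pt x t Hx eps) as [d Hd].
  exists d. intros y Hy. apply Hd; [exact Hy |].
  rewrite Rminus_eq_0, Rabs_R0. apply cond_pos.
Qed.

End JointContinuity.

Lemma continuity_2d_pt_swap (f : R -> R -> R) (x t : R) :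
  continuity_2d_pt f x t -> continuity_2d_pt (fun s y => f y s) t x.
Proof. intros Hf eps. destruct (Hf eps) as [d Hd]. exists d. intros s y Hs Hy. now apply Hd. Qed.

Lemma continuous_exp_lin (a x : R) : continuous (fun y => exp (a * y)) x.
Proof. apply (ex_derive_continuous (K := R_AbsRing) (V := R_NormedModule)). auto_derive. easy. Qed.

Lemma cont_on_uniform_at_0 (f : R -> R -> R) (a b eps : R) :
  cont_on (fun x => 0 <= x) f -> 0 < eps ->
  exists d, 0 < d /\ forall y t, 0 <= y <= d -> a <= t <= b -> Rabs (f y t - f 0 t) < eps.
Proof.
  intros Hf Heps.
  (* Extended by f 0 t to x < 0, f becomes jointly continuous at x = 0. *)
  set (g := fun x t => f (Rmax x 0) t).
  assert (Hg : forall t, a <= t <= b -> continuity_2d_pt g 0 t).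
  { intros t _ e. destruct (Hf 0 t (Rle_refl 0) e (cond_pos e)) as [d [Hd Hclose]].
    exists (mkposreal d Hd). simpl. intros y s Hy Hs. unfold g.
    rewrite (Rmax_left 0 0) by lra. apply Hclose; [apply Rmax_r | | exact Hs].
    unfold Rmax. destruct (Rle_dec y 0); [rewrite Rminus_eq_0, Rabs_R0; lra | exact Hy]. }
  destruct (uniform_continuity_2d_1d' g a b 0 Hg (mkposreal eps Heps)) as [d Hd].
  exists d. split; [apply cond_pos |]. intros y t Hy Ht.
  assert (Hdpos := cond_pos d).
  specialize (Hd t 0 t y Ht ltac:(lra) Ht ltac:(lra) ltac:(rewrite Rminus_eq_0, Rabs_R0; lra)).
  unfold g in Hd. rewrite (Rmax_left y 0), (Rmax_left 0 0) in Hd by lra. exact Hd.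
Qed.

Definition time_integral (f : R -> R -> R) (T x : R) : R := RInt (fun t => f x t) 0 T.

Section ShiftPeriodicSolution.

Variables (c T M : R) (u ut ux uxx : R -> R -> R).

Hypothesis c_pos : 0 < c.
Hypothesis T_pos : 0 < T.
Hypothesis u_cont : cont_on (fun x => 0 <= x) u.
Hypothesis ux_cont : cont_on (fun x => 0 <= x) ux.
Hypothesis ut_cont : cont_on (fun x => 0 < x) ut.
Hypothesis u_derive_t : forall x t, 0 <= x -> is_derive (fun s => u x s) t (ut x t).
Hypothesis u_derive_x : forall x t, 0 < x -> is_derive (fun y => u y t) x (ux x t).
Hypothesis ux_derive_x : forall x t, 0 < x -> is_derive (fun y => ux y t) x (uxx x t).
Hypothesis u_pde : forall x t, 0 < x -> ut x t = uxx x t - c * ux x t.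
Hypothesis u_shift : forall x, 0 <= x -> u x T = u x 0 - 2 * PI.
Hypothesis ut_neg : forall x t, 0 <= x -> ut x t < 0.
Hypothesis u_growth : forall x, 0 <= x -> Rabs (exp (- c * x / 2) * u x 0) <= M.

Lemma RInt_weighted_ut (t a b : R) : 0 < a -> 0 < b ->
  RInt (fun x => exp (- c * x) * ut x t) a b
  = exp (- c * b) * ux b t - exp (- c * a) * ux a t.
Proof.
  intros Ha Hb. apply is_RInt_unique.
  apply (is_RInt_derive (fun y => exp (- c * y) * ux y t)); intros x Hx.
  - assert (0 < x) by (apply (Rmin_Rmax_pos a b); lra).
    replace (exp (- c * x) * ut x t)
      with (- c * exp (- c * x) * ux x t + exp (- c * x) * uxx x t) by (rewrite u_pde by lra; ring).
    apply (is_derive_mult (fun y => exp (- c * y)) (fun y => ux y t)).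
    + auto_derive; [easy | ring].
    + now apply ux_derive_x.
    + apply Rmult_comm.
  - apply (continuous_mult (K := R_AbsRing)); [apply continuous_exp_lin |].
    apply (cont_on_continuous_x (fun x => 0 < x)); auto.
    now apply (Rmin_Rmax_pos a b).
Qed.

Lemma ex_RInt_weighted_u (s a b : R) : 0 < a -> 0 < b ->
  ex_RInt (fun x => exp (- c * x) * u x s) a b.
Proof.
  intros Ha Hb. apply (ex_RInt_continuous (V := R_CompleteNormedModule)). intros x Hx.
  apply (continuous_mult (K := R_AbsRing)); [apply continuous_exp_lin |].
  apply (cont_on_continuous_x (fun x => 0 <= x)); [assumption | intros; lra |].
  now apply (Rmin_Rmax_pos a b).
Qed.

Lemma is_derive_weighted_mass (a b s : R) : 0 < a -> 0 < b ->
  is_derive (fun s => RInt (fun x => exp (- c * x) * u x s) a b) s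
    (exp (- c * b) * ux b s - exp (- c * a) * ux a s).
Proof.
  intros Ha Hb. rewrite <- RInt_weighted_ut by assumption.
  assert (Hpartial : forall x s', 0 < x ->
    Derive (fun z => exp (- c * x) * u x z) s' = exp (- c * x) * ut x s').
  { intros x s' Hx. apply is_derive_unique, is_derive_scal, u_derive_t. lra. }
  replace (RInt (fun x => exp (- c * x) * ut x s) a b)
    with (RInt (fun x => Derive (fun z => exp (- c * x) * u x z) s) a b).
  2:{ apply RInt_ext. intros x Hx. apply Hpartial, (Rmin_Rmax_pos a b); lra. }
  apply (is_derive_RInt_param (fun s x => exp (- c * x) * u x s)).
  - apply filter_forall. intros s0 x Hx. eexists.
    apply is_derive_scal, u_derive_t, Rlt_le, (Rmin_Rmax_pos a b); assumption.
  - intros x Hx. assert (Hx0 : 0 < x) by now apply (Rmin_Rmax_pos a b).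
    apply continuity_2d_pt_ext_loc with (f := fun s y => exp (- c * y) * ut y s).
    + exists (mkposreal x Hx0). intros s' y _ Hy.
      symmetry. apply Hpartial, (Rabs_sub_lt_pos x), Hy.
    + apply continuity_2d_pt_mult.
      * apply (continuity_1d_2d_pt_comp (fun y => exp (- c * y)) (fun _ y => y)).
        -- apply continuity_pt_filterlim, continuous_exp_lin.
        -- apply continuity_2d_pt_id2.
      * apply continuity_2d_pt_swap, (cont_on_continuity_2d_pt (fun x => 0 < x)); auto.
  - apply filter_forall. intros s0. now apply ex_RInt_weighted_u.
Qed.

Lemma flux_balance (a b : R) : 0 < a -> 0 < b ->
  exp (- c * b) * (time_integral ux T b - 2 * PI / c)
  = exp (- c * a) * (time_integral ux T a - 2 * PI / c).
Proof.
  intros Ha Hb.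
  set (G := fun s => RInt (fun x => exp (- c * x) * u x s) a b).
  assert (Htime : G T - G 0
    = exp (- c * b) * time_integral ux T b - exp (- c * a) * time_integral ux T a).
  { assert (Hftc :=
      is_RInt_derive G (fun s => exp (- c * b) * ux b s - exp (- c * a) * ux a s) 0 T).
    transitivity (RInt (fun s => exp (- c * b) * ux b s - exp (- c * a) * ux a s) 0 T).
    - symmetry. apply is_RInt_unique, Hftc.
      + intros s _. now apply is_derive_weighted_mass.
      + intros s _. apply (continuous_minus (V := R_NormedModule));
          apply (continuous_scal_r (K := R_AbsRing) (V := R_NormedModule));
          apply (cont_on_continuous_t (fun x => 0 <= x)); auto; lra.
    - apply is_RInt_unique, (is_RInt_minus (V := R_NormedModule));
        apply (is_RInt_scal (V := R_NormedModule)), (RInt_correct (V := R_CompleteNormedModule)),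
          (cont_on_ex_RInt_t (fun x => 0 <= x)); auto; lra. }
  assert (Hspace : G T - G 0 = 2 * PI / c * (exp (- c * b) - exp (- c * a))).
  { transitivity (RInt (fun x => exp (- c * x) * u x T - exp (- c * x) * u x 0) a b).
    - symmetry. apply is_RInt_unique, (is_RInt_minus (V := R_NormedModule));
        apply (RInt_correct (V := R_CompleteNormedModule)), ex_RInt_weighted_u; assumption.
    - apply is_RInt_unique.
      apply (is_RInt_ext (fun x => - (2 * PI) * exp (- c * x))).
      { intros x Hx. rewrite u_shift by (apply Rlt_le, (Rmin_Rmax_pos a b); lra). simpl. ring. }
      set (F := fun x => 2 * PI / c * exp (- c * x)).
      replace (2 * PI / c * (exp (- c * b) - exp (- c * a))) with (minus (F b) (F a))
        by (unfold F, minus, plus, opp; simpl; ring).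
      apply (is_RInt_derive (V := R_CompleteNormedModule)).
      + intros x _. unfold F. auto_derive; [easy | field; lra].
      + intros x _. apply (continuous_scal_r (K := R_AbsRing) (V := R_NormedModule)),
          continuous_exp_lin. }
  rewrite Htime in Hspace. lra.
Qed.

Lemma flux_exp_form : exists C, forall y, 0 < y ->
  time_integral ux T y = C * exp (c * y) + 2 * PI / c.
Proof.
  exists (exp (- c * 1) * (time_integral ux T 1 - 2 * PI / c)). intros y Hy.
  rewrite <- (flux_balance 1 y) by lra.
  replace (exp (- c * y) * (time_integral ux T y - 2 * PI / c) * exp (c * y))
    with (exp (- c * y + c * y) * (time_integral ux T y - 2 * PI / c)) by (rewrite exp_plus; ring).
  replace (- c * y + c * y) with 0 by ring. rewrite exp_0. ring.
Qed.

Lemma is_derive_time_integral_u (x : R) : 0 < x ->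
  is_derive (time_integral u T) x (time_integral ux T x).
Proof.
  intros Hx. unfold time_integral.
  replace (RInt (fun t => ux x t) 0 T) with (RInt (fun t => Derive (fun y => u y t) x) 0 T)
    by (apply RInt_ext; intros t _; now apply is_derive_unique, u_derive_x).
  apply (is_derive_RInt_param (fun y t => u y t)).
  - exists (mkposreal x Hx). intros y Hy t _. eexists.
    apply u_derive_x, (Rabs_sub_lt_pos x), Hy.
  - intros t _. apply continuity_2d_pt_ext_loc with (f := ux).
    + exists (mkposreal x Hx). intros y s Hy _.
      symmetry. apply is_derive_unique, u_derive_x, (Rabs_sub_lt_pos x), Hy.
    + apply (cont_on_continuity_2d_pt (fun x => 0 <= x)); auto. intros; lra.
  - exists (mkposreal x Hx). intros y Hy.
    apply (cont_on_ex_RInt_t (fun x => 0 <= x)); [assumption |].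
    apply Rlt_le, (Rabs_sub_lt_pos x), Hy.
Qed.

Lemma time_integral_u_bound (x : R) : 0 <= x ->
  Rabs (time_integral u T x) <= T * (M * exp (c * x / 2) + 2 * PI).
Proof.
  intros Hx.
  assert (Hu0 : Rabs (u x 0) <= M * exp (c * x / 2)).
  { specialize (u_growth x Hx).
    rewrite Rabs_mult, (Rabs_pos_eq (exp _)) in u_growth by (left; apply exp_pos).
    replace (Rabs (u x 0)) with (exp (c * x / 2) * (exp (- c * x / 2) * Rabs (u x 0))).
    - rewrite Rmult_comm. apply Rmult_le_compat_r; [left; apply exp_pos | exact u_growth].
    - rewrite <- Rmult_assoc, <- exp_plus.
      replace (c * x / 2 + - c * x / 2) with 0 by field. rewrite exp_0. ring. }
  replace (T * _) with ((T - 0) * (M * exp (c * x / 2) + 2 * PI)) by ring.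
  apply abs_RInt_le_const; [lra | |].
  - now apply (cont_on_ex_RInt_t (fun x => 0 <= x)).
  - intros t Ht.
    assert (Hdec : forall a b, a <= b -> u x b <= u x a).
    { intros a b. apply (is_derive_neg_le (u x) (ut x)); intros s;
        [apply u_derive_t | apply ut_neg]; exact Hx. }
    pose proof (Hdec 0 t (proj1 Ht)). pose proof (Hdec t T (proj2 Ht)).
    rewrite u_shift in * by exact Hx.
    apply Rabs_le. apply Rabs_le_between in Hu0. lra.
Qed.

Lemma time_integral_u_exp_form (C : R) :
  (forall y, 0 < y -> time_integral ux T y = C * exp (c * y) + 2 * PI / c) ->
  exists D, forall x, 1 <= x ->
    time_integral u T x = C / c * exp (c * x) + 2 * PI / c * x + D.
Proof.
  intros Hflux.
  set (P := fun x => time_integral u T x - (C / c * exp (c * x) + 2 * PI / c * x)).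
  assert (HP : forall y, 0 < y -> is_derive P y 0).
  { intros y Hy.
    replace 0 with (time_integral ux T y - (C * exp (c * y) + 2 * PI / c))
      by (rewrite Hflux by exact Hy; ring).
    apply (is_derive_minus (V := R_NormedModule)).
    - now apply is_derive_time_integral_u.
    - auto_derive; [easy | field; lra]. }
  exists (P 1). intros x Hx.
  destruct (MVT_gen P 1 x (fun _ => 0)) as [xi [_ Hxi]].
  - intros y Hy. apply HP, (Rmin_Rmax_pos 1 x); lra.
  - intros y Hy. apply continuity_pt_filterlim.
    apply (ex_derive_continuous (K := R_AbsRing) (V := R_NormedModule)).
    exists 0. apply HP, (Rmin_Rmax_pos 1 x); lra.
  - unfold P in Hxi |- *. lra.
Qed.

Lemma flux_exp_coeff_zero (C : R) :
  (forall y, 0 < y -> time_integral ux T y = C * exp (c * y) + 2 * PI / c) -> C = 0.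
Proof.
  intros Hflux.
  destruct (time_integral_u_exp_form C Hflux) as [D Hmean].
  set (k := 2 * PI / c).
  assert (Hk : 0 <= k) by (apply Rdiv_le_0_compat; [pose proof PI_RGT_0 | ]; lra).
  assert (HC : Rabs C / c <= 0).
  { apply (exp_dominated_nonpos _ (2 * PI * T + Rabs D) (T * M + 2 * k / c) c c_pos).
    intros X HX.
    set (z := exp (c * X / 2)).
    assert (HkX : k * X <= 2 * k / c * z).
    { replace (2 * k / c * z) with (k * (2 / c * z)) by (field; lra).
      apply Rmult_le_compat_l; [exact Hk |].
      apply (Rmult_le_reg_l (c / 2)); [lra |].
      replace (c / 2 * (2 / c * z)) with z by (field; lra).
      unfold z. pose proof (exp_ineq1_le (c * X / 2)). lra. }
    replace (Rabs C / c * exp (c * X)) with (Rabs (C / c * exp (c * X))).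
    2:{ unfold Rdiv. rewrite !Rabs_mult, Rabs_inv, (Rabs_pos_eq c), (Rabs_pos_eq (exp _));
          [reflexivity | left; apply exp_pos | lra]. }
    replace (C / c * exp (c * X)) with (time_integral u T X - k * X - D)
      by (rewrite Hmean by exact HX; unfold k; ring).
    pose proof (proj1 (Rabs_le_between _ _) (time_integral_u_bound X ltac:(lra))) as HK.
    fold z in HK.
    pose proof (Rle_abs D). pose proof (Rabs_maj2 D).
    apply Rabs_le. nra. }
  assert (Rabs C <= 0) by (apply (Rmult_le_reg_r (/ c)); [apply Rinv_0_lt_compat |]; lra).
  pose proof (Rabs_pos C). apply Rabs_eq_0. lra.
Qed.

Lemma flux_const (y : R) : 0 < y -> time_integral ux T y = 2 * PI / c.
Proof.
  intros Hy. destruct flux_exp_form as [C Hflux].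
  rewrite Hflux, (flux_exp_coeff_zero C Hflux) by exact Hy. ring.
Qed.

Lemma flux_boundary : time_integral ux T 0 = 2 * PI / c.
Proof.
  assert (Hux_int : forall y, 0 <= y -> ex_RInt (fun t => ux y t) 0 T)
    by (intros; now apply (cont_on_ex_RInt_t (fun x => 0 <= x))).
  assert (Hsmall : Rabs (time_integral ux T 0 - 2 * PI / c) <= 0).
  { apply le_epsilon. intros eps Heps.
    destruct (cont_on_uniform_at_0 ux 0 T (eps / T) ux_cont (Rdiv_lt_0_compat _ _ Heps T_pos))
      as [d [Hd Hux]].
    rewrite <- (flux_const d Hd). unfold time_integral.
    replace (RInt (fun t => ux 0 t) 0 T - RInt (fun t => ux d t) 0 T)
      with (RInt (fun t => ux 0 t - ux d t) 0 T)
      by (apply (RInt_minus (V := R_CompleteNormedModule) (fun t => ux 0 t) (fun t => ux d t));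
          apply Hux_int; lra).
    replace (0 + eps) with ((T - 0) * (eps / T)) by (field; lra).
    apply abs_RInt_le_const; [lra | |].
    - apply (ex_RInt_minus (V := R_NormedModule)); apply Hux_int; lra.
    - intros t Ht. rewrite Rabs_minus_sym. left. apply Hux; lra. }
  pose proof (Rabs_pos (time_integral ux T 0 - 2 * PI / c)).
  apply Rminus_diag_uniq, Rabs_eq_0. lra.
Qed.

End ShiftPeriodicSolution.

Lemma RInt_close_to_one (g : R -> R) (T theta : R) : 0 <= T -> ex_RInt g 0 T ->
  (forall t, 0 <= t <= T -> Rabs (g t - 1) <= theta) -> Rabs (RInt g 0 T - T) <= theta * T.
Proof.
  intros HT Hg Hclose.
  replace (RInt g 0 T - T) with (RInt (fun t => g t - 1) 0 T).
  - replace (theta * T) with ((T - 0) * theta) by ring.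
    apply abs_RInt_le_const; [exact HT | | exact Hclose].
    apply (ex_RInt_minus (V := R_NormedModule)); [exact Hg | apply ex_RInt_const].
  - rewrite (RInt_minus (V := R_CompleteNormedModule) g (fun _ => 1));
      [| exact Hg | apply ex_RInt_const].
    rewrite RInt_const. unfold minus, plus, opp, scal; simpl. unfold mult; simpl. ring.
Qed.

Lemma period_bounds_of_flux (c T theta theta_inf : R) :
  0 < c -> 0 < T -> theta <= theta_inf < 1 ->
  Rabs (2 * PI / c - T) <= theta * T ->
  2 * PI / (c * (1 + theta_inf)) <= T /\ T <= 2 * PI / (c * (1 - theta_inf)).
Proof.
  intros Hc HT Htheta Hflux. apply Rabs_le_between in Hflux.
  assert (theta * T <= theta_inf * T) by (apply Rmult_le_compat_r; lra).
  assert (HPI : 2 * PI = 2 * PI / c * c) by (field; lra).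
  assert (0 <= theta) by (pose proof (Rabs_pos (2 * PI / c - T)); nra).
  split.
  - apply Rle_div_l; [nra |]. rewrite HPI.
    replace (T * (c * (1 + theta_inf))) with ((1 + theta_inf) * T * c) by ring.
    apply Rmult_le_compat_r; lra.
  - apply Rle_div_r; [nra |]. rewrite HPI.
    replace (T * (c * (1 - theta_inf))) with ((1 - theta_inf) * T * c) by ring.
    apply Rmult_le_compat_r; lra.
Qed.

Theorem lemma15 (h : R -> R) (c : R) (theta : nat -> R) (theta_inf : R)
    (T : nat -> R) (u : nat -> R -> R -> R) :
  admissible_h h ->
  0 < c ->
  (forall n, 0 <= theta n) ->
  (forall n, theta n <= theta (S n)) ->
  is_lim_seq theta theta_inf ->
  0 < theta_inf < 1 ->
  (forall n, 0 < T n) ->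
  (forall n, classical_entire_solution c (theta n) h (u n)) ->
  (forall n t, Yc c (fun x => u n x t)) ->
  (forall n x, 0 <= x -> u n x (T n) = u n x 0 - 2 * PI) ->
  (forall n x t, 0 <= x ->
     exists d, is_derive (fun s => u n x s) t d /\ d < 0) ->
  (forall n, u n 0 0 = 0) ->
  exists lambda mu, 0 < lambda /\ 0 < mu /\
    forall n, 2 * PI / mu <= T n /\ T n <= 2 * PI / lambda.
Proof.
  intros [_ [_ [Hh_le [_ [Hh_ge _]]]]] Hc Htheta_pos Htheta_incr Htheta_lim Htheta_inf HT
    Hsol HY Hshift Hdecr _.
  exists (c * (1 - theta_inf)), (c * (1 + theta_inf)).
  split; [nra |]. split; [nra |]. intros n.
  destruct (Hsol n) as [ut [ux [uxx [Cu [Cux [Cut [_ [Dt [Dx [Dxx [_ [Hpde Hbc]]]]]]]]]]]].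
  destruct (HY n 0) as [[M HM] _].
  assert (Hneg : forall x t, 0 <= x -> ut x t < 0).
  { intros x t Hx. destruct (Hdecr n x t Hx) as [d [Hd Hd_neg]].
    rewrite <- (is_derive_unique _ _ _ (Dt x t Hx)), (is_derive_unique _ _ _ Hd). exact Hd_neg. }
  apply (period_bounds_of_flux c (T n) (theta n)); [exact Hc | apply HT | | ].
  { split; [now apply is_lim_seq_incr_compare | apply Htheta_inf]. }
  rewrite <- (flux_boundary c (T n) M (u n) ut ux uxx Hc (HT n) Cu Cux Cut Dt Dx Dxx Hpde
    (Hshift n) Hneg HM).
  apply RInt_close_to_one; [left; apply HT | |].
  - apply (cont_on_ex_RInt_t (fun x => 0 <= x)); [exact Cux | lra].
  - intros t _. rewrite Hbc.
    replace (1 + theta n * h (u n 0 t) - 1) with (theta n * h (u n 0 t)) by ring.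
    rewrite Rabs_mult, (Rabs_pos_eq (theta n)) by apply Htheta_pos.
    assert (Rabs (h (u n 0 t)) <= 1) by (apply Rabs_le; split; [apply Hh_ge | apply Hh_le]).
    pose proof (Htheta_pos n). nra.
Qed.
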